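(* Let $b\ge3$, $1\le j\le b-1$, $\ell\in\{2,\dots,b\}$. For $i=1,\dots,\ell$ let $I_i=[a_i,b_i]\subseteq[0,1]$ and $J_i=[c_i,d_i]\subseteq[0,1]$ be nonempty intervals, and fix numbers $\bar p_{\ell+1},\dots,\bar p_b,\bar q_{\ell+1},\dots,\bar q_b$. Let $D$ be the set of pairs $(p,q)$ of probability vectors in $\mathbb R^b$ with $p_i\in I_i$, $q_i\in J_i$ for $i\le\ell$ and $p_i=\bar p_i$, $q_i=\bar q_i$ for $i>\ell$. If $(\bar p;\bar q)\in D$ is a maximum point of $\Psi_j$ on $D$, then either $\bar p_i=\bar p_h$ and $\bar q_i=\bar q_h$ for all $i,h\in\{1,\dots,\ell\}$, or the maximum of $\Psi_j$ on $D$ is also attained at some point $(p';q')\in D$ for which there is an index $i\in\{1,\dots,\ell\}$ with $p'_i\in\{a_i,b_i\}$ or $q'_i\in\{c_i,d_i\}$.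
   Context: For an integer $1\le j\le b-1$ and vectors $p,q\in\mathbb R^b$, $$\Psi_j(p;q)=\frac{1}{(b-j-1)!}\sum_{\sigma\in S_b}\Big(p_{\sigma(1)}\cdots p_{\sigma(j)}\,q_{\sigma(j+1)}+q_{\sigma(1)}\cdots q_{\sigma(j)}\,p_{\sigma(j+1)}\Big),$$ where $S_b$ is the set of permutations of $\{1,\dots,b\}$. *)

From HB Require Import structures.
From mathcomp Require Import all_boot all_order all_fingroup all_algebra.
From mathcomp Require Import reals.
Set Implicit Arguments. Unset Strict Implicit. Unset Printing Implicit Defensive.
Import Order.TTheory GRing.Theory Num.Theory.
Local Open Scope ring_scope.

(* Indices 1..b of the paper are represented 0-based by 'I_b:
   paper index k corresponds to ordinal k-1. *)

(* j is given as an ordinal of 'I_b (so j <= b-1 automatically); 0-based index j is paper index j+1.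
   Psi_j(p;q) = 1/(b-j-1)! * sum_{sigma in S_b}
     (p_{sigma(1)}..p_{sigma(j)} q_{sigma(j+1)} + q_{sigma(1)}..q_{sigma(j)} p_{sigma(j+1)}) *)
Definition Psi (R : realType) (b : nat) (j : 'I_b) (p q : 'I_b -> R) : R :=
  ((b - j - 1)`!%:R)^-1 *
  \sum_(s : 'S_b)
     ((\prod_(k < b | (k < j)%N) p (s k)) * q (s j)
      + (\prod_(k < b | (k < j)%N) q (s k)) * p (s j)).

Definition prob_vec (R : realType) (b : nat) (p : 'I_b -> R) : Prop :=
  (forall i, 0 <= p i) /\ \sum_(i < b) p i = 1.

Definition inD (R : realType) (b l : nat)
    (a bb c d pbar qbar : 'I_b -> R) (p q : 'I_b -> R) : Prop :=
  prob_vec p /\ prob_vec q /\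
  (forall i : 'I_b, (i < l)%N -> a i <= p i <= bb i /\ c i <= q i <= d i) /\
  (forall i : 'I_b, (l <= i)%N -> p i = pbar i /\ q i = qbar i).

From HB Require Import structures.
From mathcomp Require Import all_boot all_order all_fingroup all_algebra.
From mathcomp Require Import reals boolp.
From mathcomp Require Import ring lra.
Import Order.TTheory GRing.Theory Num.Theory.
Set Implicit Arguments. Unset Strict Implicit.
Local Open Scope ring_scope.

(* Suppose the maximum point (pbar; qbar) is neither constant on the coordinates 1..l nor
   on the boundary of D, and pick i, h <= l with (pbar_i, qbar_i) <> (pbar_h, qbar_h).
   The symmetric transfer moving the fraction t of the gap between the coordinates i and h
   (in p and in q simultaneously) keeps both vectors probability vectors.  Psi_j is affine
   in each single coordinate and invariant under swapping i and h, hence along the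
   transfer it equals Psi_j(pbar; qbar) + S t (1 - t) for a constant S.  Since the
   transfer stays in D for t in a neighbourhood [-tm, tp] of 0, maximality forces S = 0,
   and the point reached at the first exit time tp > 0 is a maximum point on the boundary. *)

Section Affine.
Variable R : comPzRingType.

Definition affine (f : R -> R) : Prop := forall t, f t = f 0 + t * (f 1 - f 0).

Lemma affine_sum (I : finType) (F : R -> I -> R) :
  (forall i, affine (F^~ i)) -> affine (fun t => \sum_i F t i).
Proof.
move=> affF t.
by rewrite (eq_bigr _ (fun i _ => affF i t)) big_split /= -mulr_sumr -sumrB.
Qed.

Lemma affine_prod (I : finType) (P : pred I) (F : R -> I -> R) (k0 : I) :
  (forall t k, k != k0 -> F t k = F 0 k) -> affine (F^~ k0) ->
  affine (fun t => \prod_(k | P k) F t k).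
Proof.
move=> constF affF0.
have [Pk0|nPk0] := boolP (P k0); last first.
  have prodE u : \prod_(k | P k) F u k = \prod_(k | P k) F 0 k.
    apply: eq_bigr => k Pk; apply: constF.
    by apply: contraNneq nPk0 => <-.
  by move=> t; rewrite /= !prodE; ring.
have prodE u : \prod_(k | P k) F u k = F u k0 * \prod_(k | P k && (k != k0)) F 0 k.
  rewrite (bigD1 k0) //=; congr (_ * _).
  by apply: eq_bigr => k /andP[_ /constF ->].
by move=> t; rewrite /= !prodE (affF0 t); ring.
Qed.

End Affine.

Section PsiAlgebra.
Variables (R : realType) (b : nat) (j : 'I_b).

Lemma Psi_summand_prod (p q : 'I_b -> R) (s : 'S_b) :
  (\prod_(k < b | (k < j)%N) p (s k)) * q (s j) =
  \prod_(k < b | (k <= j)%N) (if (k < j)%N then p (s k) else q (s k)).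
Proof.
rewrite [RHS](bigD1 j) //= ltnn mulrC; congr (_ * _).
by apply: eq_big => [k|k ->]; rewrite // ltn_neqAle andbC.
Qed.

(* If only the coordinate x of p and q moves, and affinely, each summand moves affinely:
   the coordinate x occurs in at most one factor of the product. *)
Lemma Psi_summand_affine (s : 'S_b) (x : 'I_b) (P Q : R -> 'I_b -> R) :
  (forall t y, y != x -> P t y = P 0 y /\ Q t y = Q 0 y) ->
  affine (P^~ x) -> affine (Q^~ x) ->
  affine (fun t => \prod_(k < b | (k <= j)%N)
                     (if (k < j)%N then P t (s k) else Q t (s k))).
Proof.
move=> constPQ affP affQ.
apply: (affine_prod _ (k0 := (s^-1 x)%g)).
  move=> t k kx; have skx : s k != x by apply: contraNneq kx => <-; rewrite permK.
  by have [-> ->] := constPQ t _ skx; case: ifP.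
by rewrite /affine !permKV; case: ifP.
Qed.

Lemma Psi_affine_coord (x : 'I_b) (P Q : R -> 'I_b -> R) :
  (forall t y, y != x -> P t y = P 0 y /\ Q t y = Q 0 y) ->
  affine (P^~ x) -> affine (Q^~ x) ->
  affine (fun t => Psi j (P t) (Q t)).
Proof.
move=> constPQ affP affQ.
have constQP t y : y != x -> Q t y = Q 0 y /\ P t y = P 0 y.
  by move=> /(constPQ t)[-> ->].
have affSum : affine (fun t => \sum_(s : 'S_b)
     ((\prod_(k < b | (k < j)%N) P t (s k)) * Q t (s j)
      + (\prod_(k < b | (k < j)%N) Q t (s k)) * P t (s j))).
  apply: affine_sum => s t; rewrite /= !Psi_summand_prod.
  rewrite (Psi_summand_affine s constPQ affP affQ t).
  rewrite (Psi_summand_affine s constQP affQ affP t); ring.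
by move=> t; rewrite /Psi (affSum t); ring.
Qed.

Lemma Psi_ext (p q p' q' : 'I_b -> R) :
  p =1 p' -> q =1 q' -> Psi j p q = Psi j p' q'.
Proof.
move=> eqp eqq; rewrite /Psi; congr (_ * _); apply: eq_bigr => s _.
by congr (_ + _); congr (_ * _); rewrite ?eqp ?eqq //; apply: eq_bigr => k _.
Qed.

Lemma Psi_perm (p q : 'I_b -> R) (pi : 'S_b) :
  Psi j (p \o pi) (q \o pi) = Psi j p q.
Proof.
rewrite /Psi; congr (_ * _).
rewrite [RHS](reindex_inj (mulIg pi)) /=.
apply: eq_bigr => s _; rewrite !permM.
by congr (_ + _); congr (_ * _); apply: eq_bigr => k _; rewrite permM.
Qed.

End PsiAlgebra.

Record ray_constraint (R : Type) :=
  RayConstraint { rc_lo : R; rc_hi : R; rc_start : R; rc_dir : R }.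

Section RayConstraints.
Variable R : realFieldType.
Implicit Types (c : ray_constraint R) (L : seq (ray_constraint R)) (t : R).

Definition rc_pos c t : R := rc_start c + t * rc_dir c.

Definition satisfied c t : bool := rc_lo c <= rc_pos c t <= rc_hi c.

Definition tight c t : bool := (rc_pos c t == rc_lo c) || (rc_pos c t == rc_hi c).

Lemma satisfied_convex c t1 t :
  satisfied c 0 -> satisfied c t1 -> 0 <= t <= t1 -> satisfied c t.
Proof.
case: c => lo hi x r; rewrite /satisfied /rc_pos /= !mul0r addr0.
move=> /andP[lo_x x_hi] /andP[lo_t1 t1_hi] /andP[t0 t_t1].
have [r0|r0] := leP 0 r.
  have step_le : t * r <= t1 * r by rewrite ler_wpM2r.
  have step_ge0 : 0 <= t * r by rewrite mulr_ge0.
  apply/andP; split; lra.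
have step_ge : t1 * r <= t * r by rewrite ler_wnM2r // ltW.
have step_le0 : t * r <= 0 by rewrite mulr_ge0_le0 // ltW.
apply/andP; split; lra.
Qed.

Lemma all_satisfied_convex L t1 t :
  all (satisfied^~ 0) L -> all (satisfied^~ t1) L -> 0 <= t <= t1 -> all (satisfied^~ t) L.
Proof.
move=> L0 Lt1 t_range.
apply: (sub_all _ (_ : all (predI (satisfied^~ 0) (satisfied^~ t1)) L)).
  by move=> c /andP[c0 ct1]; apply: satisfied_convex c0 ct1 t_range.
by rewrite all_predI L0 Lt1.
Qed.

Lemma satisfied_dir0 c t : rc_dir c = 0 -> satisfied c t = satisfied c 0.
Proof. by case: c => lo hi x r /= r0; rewrite /satisfied /rc_pos /= r0 !mulr0. Qed.

Lemma exit_time c :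
  satisfied c 0 -> rc_dir c != 0 ->
  exists u, [/\ 0 <= u, satisfied c u, tight c u &
              forall t, 0 <= t -> ~~ satisfied c t -> u <= t].
Proof.
case: c => lo hi x r; rewrite /satisfied /tight /rc_pos /= !mul0r addr0.
move=> /andP[lo_x x_hi] rn0.
have [r0|r0] := ltP 0 r.
  exists ((hi - x) / r).
  have reach : (hi - x) / r * r = hi - x by rewrite divfK.
  have u0 : 0 <= (hi - x) / r by rewrite divr_ge0 // ?subr_ge0 // ltW.
  split => //.
  - by rewrite reach; apply/andP; split; lra.
  - by rewrite reach; apply/orP; right; apply/eqP; ring.
  move=> t t0; rewrite negb_and -!ltNge => /orP[]; last first.
    by move=> beyond; rewrite -(ler_pM2r r0) reach; lra.
  have : 0 <= t * r by rewrite mulr_ge0 // ltW.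
  lra.
have rn : r < 0 by rewrite lt_neqAle rn0 r0.
exists ((lo - x) / r).
have reach : (lo - x) / r * r = lo - x by rewrite divfK.
have u0 : 0 <= (lo - x) / r by rewrite -(ler_nM2r rn) mul0r reach; lra.
split => //.
- by rewrite reach; apply/andP; split; lra.
- by rewrite reach; apply/orP; left; apply/eqP; ring.
move=> t t0; rewrite negb_and -!ltNge => /orP[]; first last.
  have : t * r <= 0 by rewrite mulr_ge0_le0.
  lra.
by move=> beyond; rewrite -(ler_nM2r rn) reach; lra.
Qed.

Lemma first_exit L :
  all (satisfied^~ 0) L -> has (fun c => rc_dir c != 0) L ->
  exists t, [/\ 0 <= t, all (satisfied^~ t) L & has (tight^~ t) L].
Proof.
move=> L0 Ldyn.
suff : exists t, [/\ 0 <= t, all (satisfied^~ t) L &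
    all (fun c => rc_dir c == 0) L \/ has (tight^~ t) L].
  move=> [t [t0 Lt [Lstatic|tightL]]]; last by exists t.
  by move: Ldyn; rewrite (has_predC (fun c => rc_dir c == 0)) Lstatic.
clear Ldyn; elim: L L0 => [|c L IH] /=; first by exists 0; split => //; left.
move=> /andP[c0 L0]; have [t0 [t00 Lt0 [Lstatic|Ltight]]] := IH L0.
  have [cz|cn] := eqVneq (rc_dir c) 0.
    by exists 0; split => //; [rewrite c0 | left; rewrite Lstatic].
  have [u [u0 cu tu _]] := exit_time c0 cn.
  exists u; split => //; last by right; rewrite tu.
  rewrite cu /=.
  apply: (sub_all _ (_ : all (predI (satisfied^~ 0) (fun c => rc_dir c == 0)) L)).
    by move=> c' /andP[c'0 /eqP/satisfied_dir0 ->].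
  by rewrite all_predI L0 Lstatic.
have [ct0|nct0] := boolP (satisfied c t0).
  by exists t0; split => //; [rewrite ct0 | right; rewrite Ltight orbT].
have [cz|cn] := eqVneq (rc_dir c) 0; first by move: nct0; rewrite satisfied_dir0 ?c0.
have [u [u0 cu tu ut]] := exit_time c0 cn.
exists u; split => //; last by right; rewrite tu.
by rewrite cu /=; apply: all_satisfied_convex L0 Lt0 _; rewrite u0 ut.
Qed.

End RayConstraints.

Arguments rc_pos {R} c t.
Arguments satisfied {R} c t.
Arguments tight {R} c t.

Section Transfer.
Variables (R : comPzRingType) (b : nat).
Implicit Types (p : 'I_b -> R) (i h : 'I_b) (t s : R).

Definition transfer p i h t s : 'I_b -> R := fun y =>
  if y == i then p i + t * (p h - p i)
  else if y == h then p h + s * (p i - p h) else p y.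

Lemma transfer_sum p i h t : i != h -> \sum_y transfer p i h t t y = \sum_y p y.
Proof.
move=> ih; have hi : (h == i) = false by rewrite eq_sym (negbTE ih).
have split2 (F : 'I_b -> R) :
    \sum_y F y = F i + F h + \sum_(y | (y != i) && (y != h)) F y.
  by rewrite (bigD1 i) //= (bigD1 h) 1?eq_sym //= addrA.
rewrite !split2 /transfer eqxx hi eqxx; congr (_ + _); last first.
  by apply: eq_bigr => y /andP[/negbTE -> /negbTE ->].
ring.
Qed.

Lemma transfer0 p i h : transfer p i h 0 0 =1 p.
Proof.
move=> y; rewrite /transfer; have [->|_] := eqVneq y i; first by rewrite mul0r addr0.
by have [->|_] := eqVneq y h; rewrite ?mul0r ?addr0.
Qed.

Lemma transfer1 p i h : i != h -> transfer p i h 1 1 =1 p \o tperm i h.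
Proof.
move=> ih y; rewrite /transfer /=; have [->|yi] := eqVneq y i.
  by rewrite tpermL; ring.
have [->|yh] := eqVneq y h; first by rewrite tpermR; ring.
by rewrite tpermD // eq_sym.
Qed.

End Transfer.

(* Psi_j along a symmetric transfer between two coordinates is a parabola t |-> S t (1 - t)
   above its value at t = 0: it is affine in each of the two transfer parameters and takes
   the same value at t = 0 and t = 1 by symmetry. *)
Lemma Psi_transfer (R : realType) (b : nat) (j : 'I_b) (p q : 'I_b -> R) (i h : 'I_b) :
  i != h -> exists S, forall t,
    Psi j (transfer p i h t t) (transfer q i h t t) = Psi j p q + S * (t * (1 - t)).
Proof.
move=> ih; have hi : (h == i) = false by rewrite eq_sym (negbTE ih).
pose G t s := Psi j (transfer p i h t s) (transfer q i h t s).
have affine_first s : affine (G^~ s).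
  apply: (@Psi_affine_coord _ _ j i) => [t y yi|t|t]; rewrite /transfer.
  - by rewrite (negbTE yi).
  - by rewrite eqxx; ring.
  - by rewrite eqxx; ring.
have affine_second t : affine (G t).
  apply: (@Psi_affine_coord _ _ j h) => [s y yh|s|s]; rewrite /transfer.
  - by rewrite (negbTE yh).
  - by rewrite hi eqxx; ring.
  - by rewrite hi eqxx; ring.
have G00 : G 0 0 = Psi j p q by apply: Psi_ext; apply: transfer0.
have G11 : G 1 1 = Psi j p q.
  rewrite /G (Psi_ext j (transfer1 p ih) (transfer1 q ih)); exact: Psi_perm.
exists (G 0 1 + G 1 0 - 2 * Psi j p q) => t.
rewrite -/(G t t) (affine_first t t) (affine_second 0 t) (affine_second 1 t).
by rewrite G00 G11; ring.
Qed.

Lemma parabola_flat (R : realFieldType) (S tp tm : R) : 0 < tp -> 0 < tm ->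
  (forall t, 0 <= t <= tp -> S * (t * (1 - t)) <= 0) ->
  S * (- tm * (1 - - tm)) <= 0 -> S = 0.
Proof.
move=> tp0 tm0 right_side left_side.
have [t1 [t10 t11 t1tp]] : exists t1 : R, [/\ 0 < t1, t1 < 1 & t1 <= tp].
  have [tp1|tp1] := ltP tp 1; first by exists tp.
  exists 2^-1; split; rewrite ?invr_gt0 ?invf_lt1 ?ltr0n ?ltr1n //.
  by apply: le_trans tp1; rewrite invf_le1 ?ltr0n ?ler1n.
have S_le0 : S <= 0.
  have pos : 0 < t1 * (1 - t1) by rewrite mulr_gt0 // subr_gt0.
  by rewrite -(pmulr_lle0 _ pos); apply: right_side; rewrite t1tp andbT ltW.
have S_ge0 : 0 <= S.
  have neg : - tm * (1 - - tm) < 0 by nra.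
  by rewrite -(nmulr_lle0 _ neg).
by apply/eqP; rewrite eq_le S_le0 S_ge0.
Qed.

Section TransferInDomain.
Variables (R : realType) (b l : nat) (a bb c d pbar qbar : 'I_b -> R) (i h : 'I_b).
Hypothesis lower_nonneg : forall k : 'I_b, (k < l)%N -> 0 <= a k /\ 0 <= c k.
Hypothesis Dbar : inD l a bb c d pbar qbar pbar qbar.
Hypotheses (il : (i < l)%N) (hl : (h < l)%N) (ih : i != h).

Definition on_boundary (p q : 'I_b -> R) : Prop :=
  exists k : 'I_b, (k < l)%N /\ (p k = a k \/ p k = bb k \/ q k = c k \/ q k = d k).

Definition transfer_constraints (sg : R) : seq (ray_constraint R) :=
  [:: RayConstraint (a i) (bb i) (pbar i) (sg * (pbar h - pbar i));
      RayConstraint (a h) (bb h) (pbar h) (sg * (pbar i - pbar h));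
      RayConstraint (c i) (d i) (qbar i) (sg * (qbar h - qbar i));
      RayConstraint (c h) (d h) (qbar h) (sg * (qbar i - qbar h))].

Let P (t : R) := transfer pbar i h t t.
Let Q (t : R) := transfer qbar i h t t.

Lemma transfer_constraints_pos (sg t : R) :
  map (fun c => rc_pos c t) (transfer_constraints sg) =
  [:: P (sg * t) i; P (sg * t) h; Q (sg * t) i; Q (sg * t) h].
Proof.
have hi : (h == i) = false by rewrite eq_sym (negbTE ih).
by rewrite /P /Q /transfer /rc_pos /= eqxx hi eqxx; congr [:: _; _; _; _]; ring.
Qed.

Lemma transfer_constraints0 (sg : R) : all (satisfied^~ 0) (transfer_constraints sg).
Proof.
have [_ [_ [Din _]]] := Dbar.
have [Ii Ji] := Din i il; have [Ih Jh] := Din h hl.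
by rewrite /= /satisfied /rc_pos /= !mul0r !addr0 Ii Ih Ji Jh.
Qed.

Lemma transfer_inD (sg t : R) :
  all (satisfied^~ t) (transfer_constraints sg) ->
  inD l a bb c d pbar qbar (P (sg * t)) (Q (sg * t)).
Proof.
have := transfer_constraints_pos sg t; rewrite /satisfied /=.
move=> [-> -> -> ->]; rewrite !andbT.
move=> /and4P[/andP[Ai1 Ai2] /andP[Ah1 Ah2] /andP[Ci1 Ci2] /andP[Ch1 Ch2]].
have [[p0 p1] [[q0 q1] [Din Dout]]] := Dbar.
have [a0i c0i] := lower_nonneg il; have [a0h c0h] := lower_nonneg hl.
split; [|split; [|split]].
- split; last by rewrite transfer_sum.
  move=> y; have [->|yi] := eqVneq y i; first lra.
  have [->|yh] := eqVneq y h; first lra.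
  by rewrite /P /transfer (negbTE yi) (negbTE yh).
- split; last by rewrite transfer_sum.
  move=> y; have [->|yi] := eqVneq y i; first lra.
  have [->|yh] := eqVneq y h; first lra.
  by rewrite /Q /transfer (negbTE yi) (negbTE yh).
- move=> y yl; have [->|yi] := eqVneq y i; first by rewrite Ai1 Ai2 Ci1 Ci2.
  have [->|yh] := eqVneq y h; first by rewrite Ah1 Ah2 Ch1 Ch2.
  by rewrite /P /Q /transfer (negbTE yi) (negbTE yh); apply: Din.
- move=> y yl; rewrite /P /Q /transfer.
  have [e|_] := eqVneq y i; first by move: yl; rewrite e leqNgt il.
  have [e|_] := eqVneq y h; first by move: yl; rewrite e leqNgt hl.
  exact: Dout.
Qed.

Lemma transfer_boundary (sg t : R) :
  has (tight^~ t) (transfer_constraints sg) -> on_boundary (P (sg * t)) (Q (sg * t)).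
Proof.
have := transfer_constraints_pos sg t; rewrite /tight /= orbF.
move=> [-> -> -> ->] /or4P[] /orP[] /eqP E.
- by exists i; split => //; left.
- by exists i; split => //; right; left.
- by exists h; split => //; left.
- by exists h; split => //; right; left.
- by exists i; split => //; right; right; left.
- by exists i; split => //; right; right; right.
- by exists h; split => //; right; right; left.
- by exists h; split => //; right; right; right.
Qed.

Lemma transfer_exit (sg : R) : sg != 0 -> ~ on_boundary pbar qbar ->
  (pbar i != pbar h) || (qbar i != qbar h) ->
  exists t, [/\ 0 < t, all (satisfied^~ t) (transfer_constraints sg) &
                       has (tight^~ t) (transfer_constraints sg)].
Proof.
move=> sg0 interior differ.
have moving : has (fun c => rc_dir c != 0) (transfer_constraints sg).
  rewrite /= !mulf_eq0 (negbTE sg0) /= !subr_eq0.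
  by case/orP: differ => ->; rewrite ?orbT.
have [t [t0 sat tig]] := first_exit (transfer_constraints0 sg) moving.
exists t; split => //; rewrite lt_neqAle t0 andbT eq_sym.
apply/eqP => t_eq0; apply: interior.
have [k [kl bd]] := transfer_boundary tig.
exists k; split => //; move: bd; rewrite t_eq0 mulr0 /P /Q !transfer0; exact.
Qed.

End TransferInDomain.

Lemma nonuniform_pair (R : eqType) (b l : nat) (p q : 'I_b -> R) :
  ~ (forall i h : 'I_b, (i < l)%N -> (h < l)%N -> p i = p h /\ q i = q h) ->
  exists i h : 'I_b, [/\ (i < l)%N, (h < l)%N & (p i != p h) || (q i != q h)].
Proof.
move=> nonuniform.
have [/existsP[i /existsP[h /and3P[il hl differ]]]|] :=
  boolP [exists i : 'I_b, exists h : 'I_b,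
           [&& (i < l)%N, (h < l)%N & (p i != p h) || (q i != q h)]].
  by exists i, h.
rewrite negb_exists => /forallP none; case: nonuniform => i h il hl.
move: (none i); rewrite negb_exists => /forallP/(_ h).
by rewrite il hl /= negb_or !negbK => /andP[/eqP -> /eqP ->].
Qed.

Theorem mainTheorem5 (R : realType) (b : nat) (j : 'I_b) (l : nat)
    (a bb c d pbar qbar : 'I_b -> R) :
  (3 <= b)%N -> (1 <= j)%N -> (2 <= l <= b)%N ->
  (forall i : 'I_b, (i < l)%N ->
     [/\ 0 <= a i, a i <= bb i, bb i <= 1 &
         [/\ 0 <= c i, c i <= d i & d i <= 1]]) ->
  inD l a bb c d pbar qbar pbar qbar ->
  (forall p q, inD l a bb c d pbar qbar p q -> Psi j p q <= Psi j pbar qbar) ->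
  (forall i h : 'I_b, (i < l)%N -> (h < l)%N -> pbar i = pbar h /\ qbar i = qbar h)
  \/
  (exists p' q', [/\ inD l a bb c d pbar qbar p' q',
                    Psi j p' q' = Psi j pbar qbar &
                    exists i : 'I_b, (i < l)%N /\
                      (p' i = a i \/ p' i = bb i \/ q' i = c i \/ q' i = d i)]).
Proof.
move=> _ _ _ box Dbar maxbar.
have [uniform|nonuniform] := pselect (forall i h : 'I_b, (i < l)%N -> (h < l)%N ->
  pbar i = pbar h /\ qbar i = qbar h); [by left | right].
have [boundary|interior] := pselect (on_boundary l a bb c d pbar qbar).
  by exists pbar, qbar.
have [i [h [il hl differ]]] := nonuniform_pair nonuniform.
have ih : i != h by apply: contraTneq differ => ->; rewrite !eqxx.
have lower_nonneg (k : 'I_b) : (k < l)%N -> 0 <= a k /\ 0 <= c k by move=> /box[? _ _ []].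
have [S parabola] := Psi_transfer j pbar qbar ih.
have no_gain t : inD l a bb c d pbar qbar (transfer pbar i h t t) (transfer qbar i h t t) ->
    S * (t * (1 - t)) <= 0.
  by move=> /maxbar; rewrite parabola; lra.
have [tp [tp0 sat_tp tight_tp]] := transfer_exit Dbar il hl ih (oner_neq0 R) interior differ.
have minus_one_neq0 : (-1 : R) != 0 by rewrite oppr_eq0 oner_eq0.
have [tm [tm0 sat_tm _]] := transfer_exit Dbar il hl ih minus_one_neq0 interior differ.
have S0 : S = 0.
  apply: (parabola_flat tp0 tm0).
    move=> t t_range; rewrite -[t]mul1r.
    apply/no_gain/(transfer_inD lower_nonneg Dbar il hl ih).
    exact: all_satisfied_convex (transfer_constraints0 Dbar il hl _) sat_tp t_range.
  by rewrite -mulN1r; apply/no_gain/(transfer_inD lower_nonneg Dbar il hl ih).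
have := transfer_inD lower_nonneg Dbar il hl ih sat_tp; rewrite mul1r => Dtp.
exists (transfer pbar i h tp tp), (transfer qbar i h tp tp); split => //.
  by rewrite parabola S0 mul0r addr0.
by have := transfer_boundary il hl ih tight_tp; rewrite mul1r.
Qed.
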